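(* Let $p$ be a prime number and let $n=p_1^{\alpha_1}\cdots p_r^{\alpha_r}$ ($r\ge 1$) be the prime factorization of an integer $n>1$, with distinct primes $p_i$ and exponents $\alpha_i\ge 1$. Then $n$ is $p$-multiplicatively $e$-perfect (i.e. $T_e(n)=n^p$) if and only if for each $i\in\{1,\dots,r\}$ we have $$\sigma(\alpha_i)=\gcd(\alpha_i,\sigma(\alpha_i))\,p\quad\text{and}\quad \alpha_i=\gcd(\alpha_i,\sigma(\alpha_i))\prod_{j\in\{1,\dots,r\}\setminus\{i\}}d(\alpha_j),$$ with $$2^{r-1}\le \prod_{j\in\{1,\dots,r\}\setminus\{i\}}d(\alpha_j)<p,$$ where the empty product is $1$. In particular, if $r=1$, then $\alpha_1\mid\sigma(\alpha_1)$ and $\sigma(\alpha_1)=\alpha_1 p$.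
   Context: $\sigma(m)$ is the sum and $d(m)$ the number of positive divisors of $m$. For $n=p_1^{a_1}\cdots p_r^{a_r}>1$, a divisor $d=p_1^{b_1}\cdots p_r^{b_r}$ of $n$ is an exponential divisor ($e$-divisor) if $b_i\mid a_i$ for all $i$; $T_e(n)$ denotes the product of all $e$-divisors of $n$. One has $T_e(n)=\prod_{i=1}^r p_i^{\sigma(a_i)\prod_{j\ne i}d(a_j)}$. *)

From mathcomp Require Import all_boot.
Set Implicit Arguments. Unset Strict Implicit. Unset Printing Implicit Defensive.

Definition sigma (m : nat) : nat := \sum_(d <- divisors m) d.

Definition ndiv (m : nat) : nat := size (divisors m).

Definition ediv (d n : nat) : bool :=
  (d %| n) && all (fun q => logn q d %| logn q n) (primes n).

Definition Te (n : nat) : nat := \prod_(d <- divisors n | ediv d n) d.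

From mathcomp Require Import all_boot.
Set Implicit Arguments. Unset Strict Implicit.

(* For n = q^a * m with q prime to m, the e-divisors of n are exactly the
   q^b * d with b %| a and d an e-divisor of m.  By induction on the
   factorization, the q-adic valuation of T_e(n) is sigma(a_q) * P_q with
   P_q = prod_(j != q) d(a_j), so T_e(n) = n^p amounts to
   sigma(a_q) * P_q = a_q * p for every prime q of n.  No exponent can be 1:
   writing D = prod_j d(a_j), an exponent a_q = 1 forces D = p, while an
   exponent a_j > 1 forces D > p because sigma(a_j) < d(a_j) * a_j.  Hence
   a_q < sigma(a_q), and cancelling g = gcd(a_q, sigma(a_q)) leaves coprime
   a', s' with s' * P_q = a' * p, so s' = p and a' = P_q. *)

Definition edivisors n := [seq d <- divisors n | ediv d n].

Lemma mem_edivisors n d : 0 < n -> (d \in edivisors n) = ediv d n.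
Proof. by move=> n_gt0; rewrite mem_filter -dvdn_divisors // andbAC andbb. Qed.

Lemma edivisors_dvdn n d : 0 < n -> d \in edivisors n -> d %| n.
Proof. by move=> n_gt0; rewrite mem_edivisors // => /andP[]. Qed.

Lemma edivisors_gt0 n d : 0 < n -> d \in edivisors n -> 0 < d.
Proof. by move=> n_gt0 /(edivisors_dvdn n_gt0); apply: dvdn_gt0. Qed.

Lemma Te_edivisors n : Te n = \prod_(d <- edivisors n) d.
Proof. by rewrite /Te big_filter. Qed.

Lemma logn_notin_primes r n : r \notin primes n -> logn r n = 0.
Proof. by move=> r_n; apply/eqP; rewrite -leqn0 leqNgt logn_gt0. Qed.

Lemma logn_pfactorM q j k x : prime q -> 0 < x ->
  logn j (q ^ k * x) = (j == q) * k + logn j x.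
Proof.
by move=> q_pr x_gt0; rewrite lognM ?expn_gt0 ?(prime_gt0 q_pr) // lognX logn_prime // mulnC.
Qed.

Section PrimePowerTimesCoprime.

Variables q a m : nat.
Hypotheses (q_pr : prime q) (a_gt0 : 0 < a) (m_gt0 : 0 < m) (q_m : coprime q m).

Let qa_gt0 : 0 < q ^ a. Proof. by rewrite expn_gt0 (prime_gt0 q_pr). Qed.

Let q_notin_m : q \notin primes m.
Proof. by rewrite -logn_gt0 logn_coprime. Qed.

Let primes_m_neq j : j \in primes m -> (j == q) = false.
Proof. by move=> j_m; apply: contraNF q_notin_m => /eqP <-. Qed.

Lemma logn_pfactorM_self : logn q (q ^ a * m) = a.
Proof. by rewrite logn_pfactorM // eqxx mul1n logn_coprime // addn0. Qed.

Lemma perm_primes_pfactorM : perm_eq (primes (q ^ a * m)) (q :: primes m).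
Proof.
apply: uniq_perm; rewrite /= ?primes_uniq ?q_notin_m // => j.
by rewrite primesM // primesX // primes_prime // mem_seq1 in_cons.
Qed.

Lemma prod_primes_pfactorM (G : nat -> nat -> nat) :
  \prod_(j <- primes (q ^ a * m)) G j (logn j (q ^ a * m)) =
  G q a * \prod_(j <- primes m) G j (logn j m).
Proof.
rewrite (perm_big _ perm_primes_pfactorM) big_cons logn_pfactorM_self.
by congr (_ * _); apply: eq_big_seq => j j_m; rewrite logn_pfactorM // primes_m_neq.
Qed.

Lemma ediv_pfactorM b d : 0 < d -> coprime q d ->
  ediv (q ^ b * d) (q ^ a * m) = (b %| a) && ediv d m.
Proof.
move=> d_gt0 q_d; rewrite /ediv (perm_all _ perm_primes_pfactorM) /=.
rewrite logn_pfactorM // logn_pfactorM_self eqxx mul1n logn_coprime // addn0.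
rewrite (@eq_in_all _ _ (fun j => logn j d %| logn j m)); last first.
  by move=> j j_m; rewrite /= !logn_pfactorM // primes_m_neq.
have d_qa : coprime d (q ^ a) by rewrite coprime_sym coprimeXl.
rewrite Gauss_dvd ?coprimeXl // (Gauss_dvdr _ d_qa).
have [b_a | ] := boolP (b %| a); last by rewrite !andbF.
by rewrite dvdn_mulr // dvdn_exp2l // (dvdn_leq a_gt0).
Qed.

Lemma perm_edivisors_pfactorM :
  perm_eq (edivisors (q ^ a * m)) [seq q ^ b * d | b <- divisors a, d <- edivisors m].
Proof.
have n_gt0 : 0 < q ^ a * m by rewrite muln_gt0 qa_gt0.
have coprime_q_ediv d : d \in edivisors m -> coprime q d.
  by move=> /(edivisors_dvdn m_gt0) d_m; apply: coprime_dvdr d_m q_m.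
apply: uniq_perm.
- exact/filter_uniq/divisors_uniq.
- apply: allpairs_uniq => [||[b d] [b' d']]; rewrite ?filter_uniq ?divisors_uniq //.
  move=> /allpairsP[[x y] /= [_ y_m [-> ->]]] /allpairsP[[x' y'] /= [_ y'_m [-> ->]]] /= eq_xy.
  have y_gt0 := edivisors_gt0 m_gt0 y_m; have y'_gt0 := edivisors_gt0 m_gt0 y'_m.
  have eq_x : x = x'.
    move/(congr1 (logn q)): eq_xy.
    by rewrite !logn_pfactorM // eqxx !mul1n !logn_coprime ?coprime_q_ediv // !addn0.
  move: eq_xy; rewrite -eq_x => /eqP.
  by rewrite eqn_pmul2l ?expn_gt0 ?(prime_gt0 q_pr) // => /eqP ->.
move=> d; rewrite mem_edivisors //; apply/idP/allpairsP => [ed | [[b d'] /= [b_a d'_m ->]]].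
  have d_gt0 : 0 < d := dvdn_gt0 n_gt0 (proj1 (andP ed)).
  have [d' q_d' def_d] := pfactor_coprime q_pr d_gt0.
  have d'_gt0 : 0 < d' by move: d_gt0; rewrite def_d muln_gt0 => /andP[].
  move: ed; rewrite def_d mulnC ediv_pfactorM // => /andP[b_a d'_m].
  by exists (logn q d, d'); rewrite -dvdn_divisors // mem_edivisors.
move: b_a; rewrite -dvdn_divisors // => b_a.
by rewrite ediv_pfactorM ?(edivisors_gt0 m_gt0) ?coprime_q_ediv // b_a -mem_edivisors.
Qed.

Lemma sum_edivisors_pfactorM (F : nat -> nat) :
  \sum_(d <- edivisors (q ^ a * m)) F d =
  \sum_(b <- divisors a) \sum_(d <- edivisors m) F (q ^ b * d).
Proof. by rewrite (perm_big _ perm_edivisors_pfactorM) big_allpairs_dep. Qed.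

End PrimePowerTimesCoprime.

Lemma pfactor_coprime_ind (P : nat -> Prop) : P 1 ->
  (forall q a m, prime q -> 0 < a -> 0 < m -> coprime q m -> P m -> P (q ^ a * m)) ->
  forall n, 0 < n -> P n.
Proof.
move=> P1 P_pfactorM; elim/ltn_ind=> n IHn n_gt0.
have [n_le1 | n_gt1] := leqP n 1.
  by have -> : n = 1 by apply/eqP; rewrite eqn_leq n_le1.
have q_pr := pdiv_prime n_gt1; set q := pdiv n in q_pr.
have [m q_m def_n] := pfactor_coprime q_pr n_gt0.
have a_gt0 : 0 < logn q n by rewrite logn_gt0 mem_primes q_pr n_gt0 pdiv_dvd.
have m_gt0 : 0 < m by move: n_gt0; rewrite def_n muln_gt0 => /andP[].
have qa_gt1 : 1 < q ^ logn q n by rewrite -(expn0 q) ltn_exp2l ?prime_gt1.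
rewrite def_n mulnC; apply: P_pfactorM => //; apply: IHn => //.
by rewrite def_n ltn_Pmulr.
Qed.

Lemma size_edivisors n : 0 < n ->
  size (edivisors n) = \prod_(j <- primes n) ndiv (logn j n).
Proof.
move: n; apply: pfactor_coprime_ind => [|q a m q_pr a_gt0 m_gt0 q_m IHm].
  by rewrite big_nil.
rewrite -sum1_size sum_edivisors_pfactorM //.
rewrite (prod_primes_pfactorM q_pr a_gt0 m_gt0 q_m (fun _ => ndiv)).
under eq_bigr do rewrite sum1_size.
by rewrite big_const_seq count_predT iter_addn_0 IHm mulnC.
Qed.

Lemma sum_logn_edivisors_notin n r : 0 < n -> r \notin primes n ->
  \sum_(d <- edivisors n) logn r d = 0.
Proof.
move=> n_gt0 r_n; rewrite big_seq big1 // => d /(edivisors_dvdn n_gt0) d_n.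
by apply/eqP; rewrite -leqn0 -(logn_notin_primes r_n) dvdn_leq_log.
Qed.

Lemma sum_logn_edivisors n r : 0 < n -> r \in primes n ->
  \sum_(d <- edivisors n) logn r d =
  sigma (logn r n) * \prod_(j <- primes n | j != r) ndiv (logn j n).
Proof.
move: n; apply: pfactor_coprime_ind => [|q a m q_pr a_gt0 m_gt0 q_m IHm r_n] //.
have sum_logn_qb b : \sum_(d <- edivisors m) logn r (q ^ b * d) =
    size (edivisors m) * ((r == q) * b) + \sum_(d <- edivisors m) logn r d.
  rewrite -sum1_size big_distrl -big_split big_seq [RHS]big_seq /=.
  by apply: eq_bigr => d /(edivisors_gt0 m_gt0) d_gt0; rewrite logn_pfactorM // mul1n.
rewrite sum_edivisors_pfactorM //; under eq_bigr do rewrite sum_logn_qb.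
have /= prod_split :=
  prod_primes_pfactorM q_pr a_gt0 m_gt0 q_m (fun j x => if j != r then ndiv x else 1).
rewrite [in RHS]big_mkcond prod_split logn_pfactorM //.
have q_notin_m : q \notin primes m by rewrite -logn_gt0 logn_coprime.
have [-> | r_neq_q] := eqVneq r q.
  rewrite sum_logn_edivisors_notin //; under eq_bigr do rewrite mul1n addn0.
  rewrite -big_distrr /= mul1n logn_coprime // addn0 mulnC size_edivisors //.
  rewrite mul1n; congr (_ * _); apply: eq_big_seq => j j_m.
  by rewrite ifT //; apply: contraNneq q_notin_m => <-.
have r_m : r \in primes m.
  move: r_n; rewrite (perm_mem (perm_primes_pfactorM q_pr a_gt0 m_gt0 q_m)).
  by rewrite in_cons (negbTE r_neq_q).
under eq_bigr do rewrite mul0n muln0 add0n.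
rewrite /= mul0n add0n IHm // big_const_seq count_predT iter_addn_0.
by rewrite -big_mkcond /ndiv mulnAC -mulnA.
Qed.

Lemma logn_prod r (s : seq nat) : all (fun d => 0 < d) s ->
  logn r (\prod_(d <- s) d) = \sum_(d <- s) logn r d.
Proof.
elim: s => [|d s IHs] /=; first by rewrite !big_nil logn1.
case/andP=> d_gt0 s_gt0; rewrite !big_cons lognM ?IHs //.
by rewrite big_seq prodn_cond_gt0 // => e /(allP s_gt0).
Qed.

Lemma Te_gt0 n : 0 < n -> 0 < Te n.
Proof.
by move=> n_gt0; rewrite Te_edivisors big_seq prodn_cond_gt0 // => d /(edivisors_gt0 n_gt0).
Qed.

Lemma Te_eq_expn n p : 0 < n -> Te n = n ^ p <->
  (forall r, r \in primes n ->
     sigma (logn r n) * \prod_(j <- primes n | j != r) ndiv (logn j n) = logn r n * p).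
Proof.
move=> n_gt0; have logn_Te r : logn r (Te n) = \sum_(d <- edivisors n) logn r d.
  by rewrite Te_edivisors logn_prod //; apply/allP => d /(edivisors_gt0 n_gt0).
split=> [Te_n r r_n | crit].
  by rewrite -sum_logn_edivisors // -logn_Te Te_n lognX mulnC.
apply: eqn_from_log; rewrite ?Te_gt0 ?expn_gt0 ?n_gt0 // => r.
rewrite logn_Te lognX; have [r_n | r_n] := boolP (r \in primes n).
  by rewrite sum_logn_edivisors // crit // mulnC.
by rewrite sum_logn_edivisors_notin // logn_notin_primes // muln0.
Qed.

Lemma ndiv_gt0 a : 0 < ndiv a.
Proof. by rewrite /ndiv lt0n size_eq0; apply: contraTneq (divisor1 a) => ->. Qed.

Lemma ndiv_gt1 a : 1 < a -> 1 < ndiv a.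
Proof.
move=> a_gt1; apply: (@uniq_leq_size _ [:: 1; a]) => [|d].
  by rewrite /= inE andbT neq_ltn a_gt1.
by rewrite !inE => /orP[] /eqP ->; rewrite ?divisor1 // divisors_id // ltnW.
Qed.

Lemma sigma1 : sigma 1 = 1.
Proof. by rewrite /sigma (_ : divisors 1 = [:: 1]) // big_seq1. Qed.

Lemma ltn_sigma a : 1 < a -> a < sigma a.
Proof.
move=> a_gt1; rewrite /sigma (big_rem a) ?divisors_id ?(ltnW a_gt1) //= -addn1 leq_add2l.
by rewrite (big_rem 1) ?mem_rem_uniq ?divisors_uniq //= inE divisor1 andbT neq_ltn a_gt1.
Qed.

Lemma sigma_lt_ndiv_mul a : 1 < a -> sigma a < ndiv a * a.
Proof.
move=> a_gt1; have a_gt0 := ltnW a_gt1.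
have -> : ndiv a * a = \sum_(d <- divisors a) (d + (a - d)).
  rewrite big_seq (eq_bigr (fun _ => a)) -?big_seq.
    by rewrite big_const_seq count_predT iter_addn_0 mulnC.
  by move=> d; rewrite -dvdn_divisors // => /(dvdn_leq a_gt0) le_da; rewrite subnKC.
rewrite big_split /= -{1}(addn0 (sigma a)) ltn_add2l (big_rem 1) ?divisor1 //=.
by rewrite addn_gt0 subn_gt0 a_gt1.
Qed.

Lemma gcdn_prime_cross_mul a s P p : prime p -> 0 < a -> a < s -> s * P = a * p ->
  s = gcdn a s * p /\ a = gcdn a s * P.
Proof.
move=> p_pr a_gt0 lt_as eq_sP; set g := gcdn a s.
have g_gt0 : 0 < g by rewrite gcdn_gt0 a_gt0.
have /dvdnP[a' def_a] : g %| a := dvdn_gcdl a s.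
have /dvdnP[s' def_s] : g %| s := dvdn_gcdr a s.
have co_s'a' : coprime s' a'.
  by rewrite /coprime -(eqn_pmul2r g_gt0) mul1n muln_gcdl -def_a -def_s gcdnC.
have eq_s'P : s' * P = a' * p.
  by apply/eqP; rewrite -(eqn_pmul2r g_gt0) mulnAC -def_s eq_sP def_a mulnAC.
have : s' %| p by rewrite -(Gauss_dvdr _ co_s'a') -eq_s'P dvdn_mulr.
case/primeP: p_pr => p_gt1 /[apply] /orP[/eqP s'1 | /eqP s'p].
  by move: lt_as; rewrite def_s s'1 mul1n ltnNge dvdn_leq // dvdn_gcdl.
rewrite s'p in eq_s'P def_s; move/eqP: eq_s'P.
rewrite [a' * p]mulnC eqn_pmul2l ?(ltnW p_gt1) //.
by move/eqP ->; rewrite def_a def_s !(mulnC g).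
Qed.

Lemma logn_gt1_of_Te_eq_expn p n r : prime p -> 0 < n -> Te n = n ^ p ->
  r \in primes n -> 1 < logn r n.
Proof.
move=> p_pr n_gt0 /(Te_eq_expn p n_gt0) crit r_n.
pose D := \prod_(j <- primes n) ndiv (logn j n).
have D_split j : j \in primes n ->
    D = ndiv (logn j n) * \prod_(i <- primes n | i != j) ndiv (logn i n).
  by move=> j_n; rewrite /D (bigD1_seq j) ?primes_uniq.
have D_eq_p j : j \in primes n -> logn j n = 1 -> D = p.
  move=> j_n a_j1; have := crit j j_n; rewrite a_j1 sigma1 !mul1n => <-.
  by rewrite (D_split j) // a_j1 mul1n.
have p_lt_D j : j \in primes n -> 1 < logn j n -> p < D.
  move=> j_n a_j_gt1; rewrite -(ltn_pmul2l (ltnW a_j_gt1)) -crit // (D_split j) //.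
  rewrite mulnA (mulnC (logn j n)) ltn_pmul2r ?sigma_lt_ndiv_mul //.
  by rewrite prodn_cond_gt0 // => i _; apply: ndiv_gt0.
rewrite ltn_neqAle logn_gt0 r_n andbT; apply/negP => /eqP/esym a_r1.
have a_1 j : j \in primes n -> logn j n = 1.
  move=> j_n; apply/eqP; rewrite eqn_leq logn_gt0 j_n andbT leqNgt.
  by apply/negP => /(p_lt_D j j_n); rewrite (D_eq_p r r_n a_r1) ltnn.
have : D = 1 by rewrite /D big_seq big1 // => j /a_1 ->.
by rewrite (D_eq_p r r_n a_r1) => p1; move: (prime_gt1 p_pr); rewrite p1.
Qed.

Lemma expn2_le_prod_ndiv n q : (forall j, j \in primes n -> 1 < logn j n) ->
  q \in primes n -> 2 ^ (size (primes n)).-1 <= \prod_(j <- primes n | j != q) ndiv (logn j n).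
Proof.
move=> a_gt1 q_n.
have -> : (size (primes n)).-1 = count (fun j => j != q) (primes n).
  by rewrite -(count_predC (pred1 q)) count_uniq_mem ?primes_uniq // q_n add1n.
rewrite -iter_muln_1 -big_const_seq big_seq_cond [X in _ <= X]big_seq_cond.
by apply: leq_prod => j /andP[j_n _]; apply: ndiv_gt1 (a_gt1 j j_n).
Qed.

Lemma Te_eq_expn_exponents p n : prime p -> 0 < n -> Te n = n ^ p ->
  forall q, q \in primes n ->
    let a := logn q n in
    let g := gcdn a (sigma a) in
    let P := \prod_(j <- primes n | j != q) ndiv (logn j n) in
    [/\ sigma a = g * p, a = g * P & 2 ^ (size (primes n)).-1 <= P < p].
Proof.
move=> p_pr n_gt0 Te_n q q_n /=.
have a_gt1 j : j \in primes n -> 1 < logn j n := logn_gt1_of_Te_eq_expn p_pr n_gt0 Te_n.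
have a_gt0 := ltnW (a_gt1 q q_n); have a_lt_sigma := ltn_sigma (a_gt1 q q_n).
have [def_s def_a] := gcdn_prime_cross_mul p_pr a_gt0 a_lt_sigma
  (proj1 (Te_eq_expn p n_gt0) Te_n q q_n).
split=> //; rewrite expn2_le_prod_ndiv //=.
have g_gt0 : 0 < gcdn (logn q n) (sigma (logn q n)) by rewrite gcdn_gt0 a_gt0.
by rewrite -(ltn_pmul2l g_gt0) -def_a -def_s.
Qed.

Theorem mainTheorem4 (p n : nat) (hp : prime p) (hn : 1 < n) :
  (Te n = n ^ p <->
   (forall q, q \in primes n ->
      let a := logn q n in
      let g := gcdn a (sigma a) in
      let P := \prod_(j <- primes n | j != q) ndiv (logn j n) in
      [/\ sigma a = g * p, a = g * P & 2 ^ (size (primes n)).-1 <= P < p]))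
  /\
  (size (primes n) = 1 -> Te n = n ^ p ->
     forall q, q \in primes n ->
       logn q n %| sigma (logn q n) /\ sigma (logn q n) = logn q n * p).
Proof.
have n_gt0 := ltnW hn.
have exponents := Te_eq_expn_exponents hp n_gt0.
split.
  split=> [// | conds]; apply/(Te_eq_expn p n_gt0) => r r_n.
  by have [def_s def_a _] := conds r r_n; rewrite [in LHS]def_s [in RHS]def_a mulnAC.
move=> size1 /exponents conds q q_n; have [def_s def_a _] := conds q q_n.
have primes_n : primes n = [:: q].
  by move: size1 q_n; case: (primes n) => [|x [|]] //= _; rewrite inE => /eqP ->.
rewrite primes_n big_cons eqxx /= big_nil muln1 in def_a.
split; first by rewrite [X in X %| _]def_a dvdn_gcdr.
by rewrite def_s -def_a.
Qed.
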